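(* Let $M\in\mathrm{M}_n(\mathbb{K})$ be a cyclic matrix with minimal polynomial $f=f_1^{m_1}\cdots f_s^{m_s}$, where $f_1,\dots,f_s\in\mathbb{K}[x]$ are pairwise distinct monic irreducible polynomials and $m_i\ge1$. Let $\mathcal{C}\subseteq\mathbb{L}^n$ be an $M$-cyclic code of dimension $k$ with generator polynomial $g=g_1\cdots g_s$, $g_i\mid f_i^{m_i}$ in $\mathbb{L}[x]$. Define $\ell_i=0$ if $g_i=1$ and $\ell_i=\min\{\ell\in\{1,\dots,m_i\}:g_i\mid f_i^{\ell}\}$ otherwise; and $\ell'_i=0$ if $g_i=f_i^{m_i}$ and $\ell'_i=\min\{\ell'\in\{1,\dots,m_i\}: f_i^{m_i-\ell'}\mid g_i\}$ otherwise. Then, if $k\ge1$, $$M_k(\mathcal{C})=\sum_{i=1}^s\ell'_i\deg f_i=\sum_{1\le i\le s,\ g_i\neq f_i^{m_i}}\ell'_i\deg f_i,$$ and, if $k\le n-1$, $$M_{n-k}(\mathcal{C}^\perp)=\sum_{i=1}^s\ell_i\deg f_i=\sum_{1\le i\le s,\ \gcd(g,f_i)\neq1}\ell_i\deg f_i.$$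
   Context: Let $\mathbb{L}/\mathbb{K}$ be a field extension of finite degree $m\ge n$. Vectors are row vectors; $\mathcal{C}^\perp=\{c'\in\mathbb{L}^n:\sum_jc'_jc_j=0\ \forall c\in\mathcal{C}\}$. For $c=(c_1,\dots,c_n)\in\mathbb{L}^n$, $\mathrm{Rsupp}(c)\subseteq\mathbb{K}^n$ is the $\mathbb{K}$-row space of the $m\times n$ matrix over $\mathbb{K}$ whose $j$-th column is the coordinate vector of $c_j$ in a fixed $\mathbb{K}$-basis of $\mathbb{L}$; for an $\mathbb{L}$-subspace $\mathcal{D}$, $\mathrm{wt}_R(\mathcal{D})$ is the $\mathbb{K}$-dimension of the span of all $\mathrm{Rsupp}(d)$, $d\in\mathcal{D}$. For a $k$-dimensional $\mathbb{L}$-subspace $\mathcal{C}$ and $1\le r\le k$, $M_r(\mathcal{C})=\min\{\mathrm{wt}_R(\mathcal{D}):\mathcal{D}\subseteq\mathcal{C},\dim_{\mathbb{L}}\mathcal{D}=r\}$. A matrix $M\in\mathrm{M}_n(\mathbb{K})$ is cyclic if there is $v\in\mathbb{K}^n$ (a cyclic vector) with $(v,vM^t,\dots,v(M^t)^{n-1})$ a basis; equivalently its minimal polynomial $f$ has degree $n$. An $M$-cyclic code is an $\mathbb{L}$-subspace $\mathcal{C}\subseteq\mathbb{L}^n$ with $cM^t\in\mathcal{C}$ for all $c\in\mathcal{C}$; each equals $\mathcal{C}_g=\{v\,g(M)^tP(M)^t:P\in\mathbb{L}[x]\}$ for a unique monic divisor $g$ of $f$ in $\mathbb{L}[x]$ (its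 generator polynomial), and $\dim\mathcal{C}_g=n-\deg g$. *)

From HB Require Import structures.
From mathcomp Require Import all_boot all_order all_algebra all_field.
From mathcomp Require Import boolp.
Set Implicit Arguments. Unset Strict Implicit. Unset Printing Implicit Defensive.
Import Order.TTheory GRing.Theory.
Local Open Scope ring_scope.

(* Vectors of L^n are row vectors 'rV[L]_n ; L-subspaces of L^n are represented
   (mxalgebra style) by the row space of a matrix 'M[L]_n ; dimension = \rank. *)

Section Defs.
Variables (K : fieldType) (L : fieldExtType K).

Definition coordmx n (c : 'rV[L]_n) : 'M[K]_(\dim {:L}, n) :=
  \matrix_(i < \dim {:L}, j < n) coord (vbasis {:L}) i (c 0 j).

(* Rsupp(c) : its K-row space (as an mxalgebra subspace of K^n) *)
Definition Rsupp n (c : 'rV[L]_n) : 'M[K]_(\dim {:L}, n) := coordmx c.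

(* wt_R(D) : K-dimension of the span of all Rsupp(d), d in D (= row space of D).
   The span is the smallest K-subspace containing every Rsupp(d); its dimension is
   the least rank of a K-subspace W containing all of them. *)
Definition wtR_pred n (D : 'M[L]_n) (w : nat) : bool :=
  `[< exists W : 'M[K]_n, \rank W = w /\
        forall d : 'rV[L]_n, (d <= D)%MS -> (Rsupp d <= W)%MS >].

Lemma wtR_ex n (D : 'M[L]_n) : exists w, wtR_pred D w.
Proof.
exists n; apply/asboolP; exists 1%:M; split; first by rewrite mxrank1.
by move=> d _; exact: submx1.
Qed.

Definition wtR n (D : 'M[L]_n) : nat := ex_minn (wtR_ex D).

Definition Mr_pred n (C : 'M[L]_n) (r : nat) (w : nat) : bool :=
  `[< exists D : 'M[L]_n, [/\ (D <= C)%MS, \rank D = r & wtR D = w] >].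

Definition Mr n (C : 'M[L]_n) (r : nat) : nat :=
  match pselect (exists w, Mr_pred C r w) with
  | left H => ex_minn H
  | right _ => 0%N
  end.

Definition dualC n (C : 'M[L]_n) : 'M[L]_n := kermx C^T.

Definition cyclic_mx n (M : 'M[K]_n) : Prop :=
  exists v : 'rV[K]_n, row_free (\matrix_(i < n) (v *m (M^T) ^+ i)).

(* the least element of {1,...,m} satisfying P (0 if there is none) *)
Definition min_in_1m (P : pred nat) (m : nat) : nat :=
  head 0%N [seq l <- iota 1 m | P l].

Definition polyL (p : {poly K}) : {poly L} := map_poly (in_alg L) p.
Definition mxL n (M : 'M[K]_n) : 'M[L]_n := map_mx (in_alg L) M.

Definition ell (gi : {poly L}) (fi : {poly K}) (mi : nat) : nat :=
  if gi == 1 then 0%N else min_in_1m (fun l => gi %| polyL fi ^+ l) mi.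
Definition ell' (gi : {poly L}) (fi : {poly K}) (mi : nat) : nat :=
  if gi == polyL fi ^+ mi then 0%N
  else min_in_1m (fun l => polyL fi ^+ (mi - l) %| gi) mi.

End Defs.

From HB Require Import structures.
From mathcomp Require Import all_boot all_order all_algebra all_field.
From mathcomp Require Import zify boolp.
Set Implicit Arguments. Unset Strict Implicit. Unset Printing Implicit Defensive.
Import Order.TTheory GRing.Theory.
Local Open Scope ring_scope.

(* Both sides are weights of a whole code: the only subspace of C of dimension dim C is
   C itself, so M_k(C) = wt_R(C) and M_{n-k}(C^perp) = wt_R(C^perp).  A cyclic vector v
   identifies K^n with K[x]/(f) through p |-> v p(M^t), and C is spanned over L by
   g(M^t).  If W is a K-subspace whose L-span contains C, the q in K[x] with
   v (qr)(M^t) in W for all r form an ideal containing f and every K-coordinate of g,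
   hence their gcd, which divides h = prod f_i^(m_i - l'_i), the largest divisor of f
   over K whose image divides g; so W contains h(M^t) K^n, of dimension n - deg h.
   Dually the K-span of C^perp is the orthogonal of h'(M^t) K^n, where
   h' = prod f_i^(l_i) is the least divisor of f over K whose image is a multiple of g;
   that orthogonal has dimension deg h'. *)

Lemma horner_mx_widen (R : comNzRingType) n (A : 'M[R]_n.+1) (p : {poly R}) d :
  (size p <= d)%N -> horner_mx A p = \sum_(i < d) p`_i *: A ^+ i.
Proof.
move=> size_p; rewrite -{1}[p]coefK poly_def rmorph_sum.
rewrite (big_ord_widen d (fun i => horner_mx A (p`_i *: 'X^i)) size_p) big_mkcond /=.
apply: eq_bigr => i _; case: ltnP => [_|le_p_i]; last by rewrite nth_default ?scale0r.
rewrite -mul_polyC rmorphM /= horner_mx_C rmorphXn /= horner_mx_X.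
by rewrite -scalemx1 -scalerAl mul1r.
Qed.

Lemma trmxX (R : comNzRingType) n (A : 'M[R]_n.+1) i : (A ^+ i)^T = A^T ^+ i.
Proof.
elim: i => [|i IHi]; first by rewrite !expr0 trmx1.
by rewrite exprSr exprS -IHi -mulmxE trmx_mul.
Qed.

Lemma trmx_horner (R : comNzRingType) n (A : 'M[R]_n.+1) p :
  (horner_mx A p)^T = horner_mx A^T p.
Proof.
rewrite !(horner_mx_widen _ (leqnn (size p))) linear_sum.
by apply: eq_bigr => i _; rewrite linearZ /= trmxX.
Qed.

Section CyclicVector.
Variables (F : fieldType) (n : nat) (B : 'M[F]_n.+1) (v : 'rV[F]_n.+1).
Hypothesis cyclic_v : row_free (\matrix_(i < n.+1) (v *m B ^+ i)).
Let Kry := \matrix_(i < n.+1) (v *m B ^+ i).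

Let Kry_unit : Kry \in unitmx.
Proof. by rewrite -row_free_unit. Qed.

Lemma mul_krylov (u : 'rV_n.+1) : u *m Kry = v *m horner_mx B (rVpoly u).
Proof.
rewrite (horner_mx_widen _ (size_poly _ _)) mulmx_sumr mulmx_sum_row.
by apply: eq_bigr => i _; rewrite rowK coef_rVpoly_ord scalemxAr.
Qed.

Lemma horner_cyclic_eq0 (p : {poly F}) :
  (size p <= n.+1)%N -> v *m horner_mx B p = 0 -> p = 0.
Proof.
move=> size_p vp0; have : poly_rV p *m Kry = 0 by rewrite mul_krylov poly_rV_K.
move/(congr1 (mulmx^~ (invmx Kry))); rewrite mulmxK // mul0mx.
by move/(congr1 rVpoly); rewrite poly_rV_K // linear0.
Qed.

Lemma horner_cyclic_onto (x : 'rV[F]_n.+1) :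
  exists2 p : {poly F}, (size p <= n.+1)%N & x = v *m horner_mx B p.
Proof.
exists (rVpoly (x *m invmx Kry)); first by rewrite size_poly.
by rewrite -mul_krylov mulmxKV.
Qed.

Lemma rank_horner_mx_ge (h : {poly F}) : h != 0 -> (size h <= n.+2)%N ->
  (n.+2 - size h <= \rank (horner_mx B h))%N.
Proof.
move=> h_neq0 size_h; set r := (n.+2 - size h)%N.
pose Z := \matrix_(i < r) (v *m B ^+ i *m horner_mx B h).
have mulZ (u : 'rV_r) : u *m Z = v *m horner_mx B (rVpoly u * h).
  rewrite rmorphM /= mulmxA (horner_mx_widen _ (size_poly _ _)).
  rewrite mulmx_sumr mulmx_suml mulmx_sum_row; apply: eq_bigr => i _.
  by rewrite rowK coef_rVpoly_ord -scalemxAr scalemxAl.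
have Z_free : row_free Z.
  rewrite -kermx_eq0; apply/rowV0P => u /sub_kermxP; rewrite mulZ => uh0.
  have size_u : (size (rVpoly u) <= r)%N by rewrite size_poly.
  have h_pos : (0 < size h)%N by rewrite size_poly_gt0.
  have size_uh := size_polyMleq (rVpoly u) h.
  have /eqP : rVpoly u * h = 0.
    apply: horner_cyclic_eq0 uh0; apply: leq_trans size_uh _.
    by move: size_u; rewrite /r; move: (size (rVpoly u)) => a; lia.
  rewrite mulf_eq0 (negbTE h_neq0) orbF => /eqP u0.
  by rewrite -[u]rVpolyK u0 linear0.
move/eqP: Z_free => <-; apply: mxrankS.
by apply/row_subP => i; rewrite rowK submxMl.
Qed.

Lemma rank_horner_mx_dvd (phi h : {poly F}) : horner_mx B phi = 0 ->
  size phi = n.+2 -> h %| phi -> \rank (horner_mx B h) = (n.+2 - size h)%N.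
Proof.
move=> phiB0 size_phi h_dvd; set h' := phi %/ h.
have phi_neq0 : phi != 0 by rewrite -size_poly_gt0 size_phi.
have phiE : phi = h' * h by rewrite divpK.
have h_neq0 : h != 0 by apply: contraNneq phi_neq0 => h0; rewrite phiE h0 mulr0.
have h'_neq0 : h' != 0 by apply: contraNneq phi_neq0 => h0; rewrite phiE h0 mul0r.
have h_pos : (0 < size h)%N by rewrite size_poly_gt0.
have h'_pos : (0 < size h')%N by rewrite size_poly_gt0.
have size_h'h : (size h' + size h = n.+3)%N.
  have := size_mul h'_neq0 h_neq0; rewrite -phiE size_phi.
  by move: h_pos h'_pos; move: (size h) (size h') => a b; lia.
have size_h : (size h <= n.+2)%N by rewrite -size_phi dvdp_leq.
have size_h' : (size h' <= n.+2)%N.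
  by move: size_h'h h_pos; move: (size h) (size h') => a b; lia.
have ker_h' : (horner_mx B h' <= kermx (horner_mx B h))%MS.
  by apply/sub_kermxP; rewrite mulmxE -rmorphM /= -phiE phiB0.
have := mxrankS ker_h'; rewrite mxrank_ker.
move: (rank_horner_mx_ge h_neq0 size_h) (rank_horner_mx_ge h'_neq0 size_h').
move: (rank_leq_row (horner_mx B h)) size_h'h.
by move: (size h) (size h') (\rank (horner_mx B h)) (\rank (horner_mx B h')) => *; lia.
Qed.

Lemma horner_cyclic_sub_dvdp (phi g p : {poly F}) : horner_mx B phi = 0 ->
  size phi = n.+2 -> g %| phi ->
  (v *m horner_mx B p <= horner_mx B g)%MS -> g %| p.
Proof.
move=> phiB0 size_phi g_dvd /submxP [w pE].
have [q _ wE] := horner_cyclic_onto w.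
have phi_neq0 : phi != 0 by rewrite -size_poly_gt0 size_phi.
have vpqg0 : v *m horner_mx B (p - q * g) = 0.
  by rewrite rmorphB /= mulmxBr pE wE rmorphM /= -mulmxE mulmxA subrr.
have vr0 : v *m horner_mx B ((p - q * g) %% phi) = 0.
  by move: vpqg0; rewrite {1}(divp_eq (p - q * g) phi) rmorphD rmorphM /= phiB0 mulr0 add0r.
have size_r : (size ((p - q * g) %% phi)%R <= n.+1)%N.
  by have := ltn_modp (p - q * g) phi; rewrite phi_neq0 size_phi.
have /(dvdp_trans g_dvd) : phi %| p - q * g by rewrite /dvdp (horner_cyclic_eq0 size_r vr0).
by move/(dvdp_add (dvdp_mull q (dvdpp g))); rewrite addrC subrK.
Qed.

End CyclicVector.

Lemma kermx_trS (F : fieldType) m1 m2 n (X : 'M[F]_(m1, n)) (Y : 'M[F]_(m2, n)) :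
  (X <= Y)%MS -> (kermx Y^T <= kermx X^T)%MS.
Proof.
case/submxP => Z ->; apply/sub_kermxP.
by rewrite trmx_mul mulmxA mulmx_ker mul0mx.
Qed.

Lemma kermx_trK (F : fieldType) m n (X : 'M[F]_(m, n)) : (kermx (kermx X^T)^T == X)%MS.
Proof.
have sX : (X <= kermx (kermx X^T)^T)%MS.
  by apply/sub_kermxP; rewrite -(trmxK (X *m _)) trmx_mul trmxK mulmx_ker trmx0.
rewrite sX andbT -(mxrank_leqif_sup sX).2 !mxrank_ker !mxrank_tr mxrank_ker mxrank_tr.
by move: (rank_leq_col X); move: (\rank X) => r; lia.
Qed.

Section Coordinates.
Variables (K : fieldType) (L : fieldExtType K).
Local Notation b := (vbasis {:L}).
Local Notation lift := (map_mx (in_alg L)).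

Lemma coordmx_mul_map p N (X : 'M[K]_(p, N)) (u : 'rV[L]_p) :
  coordmx (u *m lift X) = coordmx u *m X.
Proof.
apply/matrixP => i j; rewrite !mxE linear_sum; apply: eq_bigr => r _.
by rewrite !mxE /= mulr_algr linearZ /= mulrC.
Qed.

Lemma coordmxK N (d : 'rV[L]_N) :
  d = \sum_(t < \dim {:L}) b`_t *: lift (row t (coordmx d)).
Proof.
apply/matrixP => i j; rewrite summxE (ord1 i) [LHS](coord_vbasis (memvf (d 0 j))).
by apply: eq_bigr => t _; rewrite !mxE /= mulr_algr.
Qed.

Lemma sub_map_coordmx N (d : 'rV[L]_N) (W : 'M[K]_N) :
  (d <= lift W)%MS = (coordmx d <= W)%MS.
Proof.
apply/idP/idP => [/submxP [u ->]|sW]; first by rewrite coordmx_mul_map submxMl.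
rewrite [d]coordmxK; apply: summx_sub => t _; apply: scalemx_sub.
by rewrite map_submx (submx_trans (row_sub _ _) sW).
Qed.

Lemma wtR_predE N (X : 'M[L]_N) w :
  wtR_pred X w <-> exists W : 'M[K]_N, \rank W = w /\ (X <= lift W)%MS.
Proof.
split => [/asboolP [W [rW XW]]|[W [rW XW]]].
  by exists W; split => //; apply/row_subP => i; rewrite sub_map_coordmx XW ?row_sub.
apply/asboolP; exists W; split => // d dX.
by rewrite /Rsupp -sub_map_coordmx (submx_trans dX XW).
Qed.

Lemma wtR_eq N (X : 'M[L]_N) w :
  (exists W : 'M[K]_N, \rank W = w /\ (X <= lift W)%MS) ->
  (forall W : 'M[K]_N, (X <= lift W)%MS -> (w <= \rank W)%N) ->
  wtR X = w.
Proof.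
move=> /wtR_predE w_attained w_min; rewrite /wtR; case: ex_minnP => w' + w'_min.
case/wtR_predE => W [rW XW].
by apply/eqP; rewrite eqn_leq w'_min // -rW w_min.
Qed.

Lemma Mr_rank N (X : 'M[L]_N) : Mr X (\rank X) = wtR X.
Proof.
rewrite /Mr; case: pselect => [w_ex|]; last first.
  by case; exists (wtR X); apply/asboolP; exists X; split.
case: ex_minnP => w /asboolP [Y [YX rY <-]] _.
have eqYX : (Y == X)%MS by rewrite /eqmx YX -(mxrank_leqif_sup YX).2; apply/eqP.
rewrite /wtR; apply: eq_ex_minn => w'.
apply/asboolP/asboolP => -[W [rW YW]]; exists W; split => // d dsub; apply: YW.
  by rewrite (eqmxP eqYX).
by rewrite -(eqmxP eqYX).
Qed.

Definition coord_poly t (G : {poly L}) : {poly K} :=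
  \poly_(i < size G) coord b t G`_i.

Lemma coef_coord_poly t G k : (coord_poly t G)`_k = coord b t G`_k.
Proof.
rewrite coef_poly; case: ltnP => // le_G_k.
by rewrite nth_default // linear0.
Qed.

Lemma coord_polyK (G : {poly L}) :
  G = \sum_(t < \dim {:L}) (b`_t)%:P * polyL L (coord_poly t G).
Proof.
apply/polyP => k; rewrite coef_sum [LHS](coord_vbasis (memvf G`_k)).
by apply: eq_bigr => t _; rewrite coefCM coef_map /= coef_coord_poly mulr_algr.
Qed.

Lemma coord_polyM t (a : {poly K}) (G : {poly L}) :
  coord_poly t (polyL L a * G) = a * coord_poly t G.
Proof.
apply/polyP => k; rewrite coef_coord_poly !coefM linear_sum.
by apply: eq_bigr => j _; rewrite coef_map /= coef_coord_poly mulr_algl linearZ.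
Qed.

Lemma row_coordmx_horner p (B : 'M[K]_p.+1) (v : 'rV[K]_p.+1) (G : {poly L}) t :
  row t (coordmx (lift v *m horner_mx (lift B) G)) =
  v *m horner_mx B (coord_poly t G).
Proof.
rewrite (horner_mx_widen _ (leqnn (size G))).
rewrite (horner_mx_widen _ (size_poly _ _ : size (coord_poly t G) <= size G)%N).
rewrite !mulmx_sumr; apply/rowP => j.
rewrite [RHS]summxE mxE /coordmx mxE summxE linear_sum; apply: eq_bigr => i _.
rewrite -!scalemxAr -rmorphXn -map_mxM !mxE /= mulr_algr linearZ /= coef_coord_poly.
by rewrite mulrC.
Qed.

End Coordinates.

Lemma head_filter_iota_le (P : pred nat) a k l : (a <= l < a + k)%N -> P l ->
  let x := head 0%N [seq j <- iota a k | P j] in (x <= l)%N /\ P x.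
Proof.
elim: k a => [|k IHk] a /andP [le_a_l lt_l_ak] Pl /=; first by lia.
case: ifP => [//|Pa].
have [la|l_neq_a] := eqVneq l a; first by rewrite la Pa in Pl.
by apply: IHk Pl; apply/andP; split; lia.
Qed.

Lemma min_in_1m_spec (P : pred nat) m l : (0 < l)%N -> (l <= m)%N -> P l ->
  (min_in_1m P m <= l)%N /\ P (min_in_1m P m).
Proof. by move=> l_pos le_l_m; apply: head_filter_iota_le; apply/andP; split; lia. Qed.

Lemma min_in_1m_le (P : pred nat) m : (min_in_1m P m <= m)%N.
Proof.
rewrite /min_in_1m; case E: [seq _ <- _ | _] => [|x r] //=.
have : x \in [seq l <- iota 1 m | P l] by rewrite E mem_head.
by rewrite mem_filter mem_iota => /andP [_]; lia.
Qed.

Section Ell.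
Variables (K : fieldType) (L : fieldExtType K).
Variables (gi : {poly L}) (fi : {poly K}) (mi : nat).
Hypotheses (gi_monic : gi \is monic) (fi_monic : fi \is monic).
Hypothesis gi_dvd : gi %| polyL L fi ^+ mi.
Local Notation Fi := (polyL L fi).

Lemma ell'_le : (ell' gi fi mi <= mi)%N.
Proof. by rewrite /ell'; case: ifP => // _; apply: min_in_1m_le. Qed.

Lemma ell_le : (ell gi fi mi <= mi)%N.
Proof. by rewrite /ell; case: ifP => // _; apply: min_in_1m_le. Qed.

Lemma ell'_dvd : Fi ^+ (mi - ell' gi fi mi) %| gi.
Proof.
rewrite /ell'; case: ifP => [/eqP ->|_]; first by rewrite subn0.
have [->|mi_pos] := posnP mi; first by rewrite expr0 dvd1p.
have Pmi : Fi ^+ (mi - mi) %| gi by rewrite subnn expr0 dvd1p.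
by have [] := min_in_1m_spec (P := fun l => Fi ^+ (mi - l) %| gi) mi_pos (leqnn mi) Pmi.
Qed.

Lemma ell'_max a : (a <= mi)%N -> Fi ^+ a %| gi -> (a <= mi - ell' gi fi mi)%N.
Proof.
move=> le_a_mi Fa_dvd; rewrite /ell'; case: ifP => [_|gi_neq]; first by rewrite subn0.
have [a_mi|a_neq_mi] := eqVneq a mi.
  have : Fi ^+ mi %= gi by rewrite /eqp -a_mi Fa_dvd a_mi gi_dvd.
  by rewrite eqp_monic ?monic_exp ?map_monic // eq_sym gi_neq.
have Pa : Fi ^+ (mi - (mi - a)) %| gi by rewrite subKn.
have mia_pos : (0 < mi - a)%N by rewrite subn_gt0 ltn_neqAle a_neq_mi.
have [] := min_in_1m_spec (P := fun l => Fi ^+ (mi - l) %| gi) mia_pos (leq_subr a mi) Pa.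
by move=> *; lia.
Qed.

Lemma ell_dvd : gi %| Fi ^+ (ell gi fi mi).
Proof.
rewrite /ell; case: ifP => [/eqP ->|gi_neq1]; first by rewrite expr0 dvdpp.
have [mi0|mi_pos] := posnP mi.
  by move: gi_dvd; rewrite mi0 expr0 dvdp1 size_poly_eq1 eqp_monic ?monic1 // gi_neq1.
by have [] := min_in_1m_spec (P := fun l => gi %| Fi ^+ l) mi_pos (leqnn mi) gi_dvd.
Qed.

Lemma ell_min a : gi %| Fi ^+ a -> (ell gi fi mi <= a)%N.
Proof.
move=> gi_dvd_a; rewrite /ell; case: ifP => // gi_neq1.
have [le_mi_a|lt_a_mi] := leqP mi a; first exact: leq_trans (min_in_1m_le _ _) le_mi_a.
have [a0|a_pos] := posnP a.
  by move: gi_dvd_a; rewrite a0 expr0 dvdp1 size_poly_eq1 eqp_monic ?monic1 // gi_neq1.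
by have [] := min_in_1m_spec (P := fun l => gi %| Fi ^+ l) a_pos (ltnW lt_a_mi) gi_dvd_a.
Qed.

End Ell.

Lemma coprimep_prodr (R : idomainType) (I : eqType) (r : seq I) (P : pred I)
    (X : I -> {poly R}) p :
  (forall i, i \in r -> P i -> coprimep p (X i)) -> coprimep p (\prod_(i <- r | P i) X i).
Proof.
move=> copX; rewrite big_seq_cond; apply: (big_ind (coprimep p)) => [|x y|i].
- exact: coprimep1.
- by rewrite coprimepMr => -> ->.
- by case/andP; apply: copX.
Qed.

Lemma prod_dvdp_coprime (R : idomainType) (I : finType) (X : I -> {poly R}) q :
  (forall i j, i != j -> coprimep (X i) (X j)) -> (forall i, X i %| q) ->
  \prod_i X i %| q.
Proof.
move=> copX dvdX; suff : forall r : seq I, uniq r -> \prod_(i <- r) X i %| q.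
  by apply; rewrite index_enum_uniq.
elim=> [|a r IHr] /=; first by rewrite big_nil dvd1p.
case/andP => a_notin_r uniq_r; rewrite big_cons Gauss_dvdp ?dvdX ?IHr //.
by apply: coprimep_prodr => i i_in_r _; apply: copX; apply: contraNneq a_notin_r => ->.
Qed.

Lemma dvdp_prod (R : idomainType) (I : finType) (X Y : I -> {poly R}) :
  (forall i, X i %| Y i) -> \prod_i X i %| \prod_i Y i.
Proof.
by move=> dvdXY; apply: (big_ind2 (fun p q => p %| q)) => // *; apply: dvdp_mul.
Qed.

Lemma predn_size_prod (R : idomainType) (I : finType) (X : I -> {poly R}) :
  (forall i, X i != 0) -> (size (\prod_i X i)).-1 = (\sum_i (size (X i)).-1)%N.
Proof.
move=> X_neq0.
suff [] : \prod_i X i != 0 /\ (size (\prod_i X i)).-1 = (\sum_i (size (X i)).-1)%N by [].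
apply: (@big_ind2 {poly R} nat (fun p d => p != 0 /\ (size p).-1 = d) 1 *%R 0%N addn).
- by rewrite oner_neq0 size_poly1.
- move=> p1 d1 p2 d2 [p1_neq0 <-] [p2_neq0 <-]; rewrite mulf_neq0 // size_mul //.
  move: (size_poly_gt0 p1) (size_poly_gt0 p2); rewrite p1_neq0 p2_neq0.
  by move: (size p1) (size p2) => a b; lia.
- by move=> i _; split.
Qed.

Lemma irreducible_power_split (K : fieldType) (F q : {poly K}) :
  irreducible_poly F -> q != 0 -> exists a r, q = F ^+ a * r /\ coprimep F r.
Proof.
move=> F_irr; elim: {q}(size q) {-2}q (leqnn (size q)) => [|k IHk] q size_q q_neq0.
  by move: size_q; rewrite leqn0 size_poly_eq0 (negbTE q_neq0).
have [F_dvd_q|F_ndvd_q] := boolP (F %| q); last first.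
  by exists 0%N, q; rewrite expr0 mul1r irreducible_poly_coprime.
have qE : q = q %/ F * F by rewrite divpK.
have F_neq0 : F != 0 by rewrite -size_poly_gt0 (ltn_trans _ F_irr.1).
have q'_neq0 : q %/ F != 0 by apply: contraNneq q_neq0 => q'0; rewrite qE q'0 mul0r.
have size_q' : (size (q %/ F)%R <= k)%N.
  have := size_mul q'_neq0 F_neq0; rewrite -qE; move: F_irr.1 size_q.
  by move: (size q) (size (q %/ F)) (size F) => x y z; lia.
have [a [r [q'E r_cop]]] := IHk _ size_q' q'_neq0.
by exists a.+1, r; split => //; rewrite qE q'E exprSr mulrAC.
Qed.

Section KFactors.
Variables (K : fieldType) (L : fieldExtType K) (s : nat).
Variables (f : 'I_s -> {poly K}) (m : 'I_s -> nat) (g : 'I_s -> {poly L}).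
Hypotheses (f_monic : forall i, f i \is monic) (f_irr : forall i, irreducible_poly (f i)).
Hypotheses (f_inj : injective f) (g_monic : forall i, g i \is monic).
Hypothesis g_dvd : forall i, g i %| polyL L (f i) ^+ m i.
Local Notation fprod := (\prod_(i < s) f i ^+ m i).
Local Notation gprod := (\prod_(i < s) g i).
Local Notation e' i := (ell' (g i) (f i) (m i)).
Local Notation e i := (ell (g i) (f i) (m i)).

(* [Kfloor] is the largest divisor of [fprod] in K[x] whose image divides [gprod] in
   L[x], and [Kceil] the least one whose image is a multiple of [gprod]. *)
Definition Kfloor := \prod_(i < s) f i ^+ (m i - e' i).
Definition Kceil := \prod_(i < s) f i ^+ e i.

Lemma coprimep_fX i j a b : i != j -> coprimep (f i ^+ a) (f j ^+ b).
Proof.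
move=> i_neq_j; apply/coprimep_expl/coprimep_expr.
rewrite irreducible_poly_coprime //; apply/negP => fi_dvd_fj.
have size_fi : size (f i) != 1%N by rewrite neq_ltn (f_irr i).1 orbT.
have := (f_irr j).2 (f i) size_fi fi_dvd_fj; rewrite eqp_monic // => /eqP /f_inj fij.
by rewrite fij eqxx in i_neq_j.
Qed.

Lemma coprimep_polyL_fX_g i j a : i != j -> coprimep (polyL L (f i) ^+ a) (g j).
Proof.
move=> i_neq_j; apply: coprimep_dvdl (g_dvd j) _.
by rewrite -!rmorphXn coprimep_map coprimep_fX.
Qed.

Lemma g_dvd_prod i : g i %| gprod.
Proof. by rewrite (bigD1 i) //= dvdp_mulr. Qed.

Lemma f_neq0 i : f i != 0.
Proof. exact: monic_neq0. Qed.

Lemma Kceil_dvd q : gprod %| polyL L q -> Kceil %| q.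
Proof.
move=> gprod_dvd_q; have [->|q_neq0] := eqVneq q 0; first exact: dvdp0.
apply: prod_dvdp_coprime => [i j|i]; first exact: coprimep_fX.
have [a [r [qE r_cop]]] := irreducible_power_split (f_irr i) q_neq0.
have gi_dvd : g i %| polyL L (f i) ^+ a * polyL L r.
  by rewrite -rmorphXn -rmorphM -qE (dvdp_trans (g_dvd_prod i)).
have gi_cop : coprimep (g i) (polyL L r).
  by apply: coprimep_dvdr (g_dvd i) _; rewrite coprimep_expl ?coprimep_map.
move: gi_dvd; rewrite Gauss_dvdpl // => /(ell_min (m i) (g_monic i)) le_e_a.
by rewrite qE dvdp_mulr // dvdp_exp2l.
Qed.

Lemma dvdp_Kfloor p : p %| fprod -> polyL L p %| gprod -> p %| Kfloor.
Proof.
move=> p_dvd p_gprod; set r := fprod %/ p.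
have fprodE : fprod = r * p by rewrite divpK.
have fprod_neq0 : fprod != 0 by apply/prodf_neq0 => i _; rewrite expf_neq0 ?f_neq0.
have r_neq0 : r != 0 by apply: contraNneq fprod_neq0 => r0; rewrite fprodE r0 mul0r.
pose H := \prod_(i < s) f i ^+ e' i.
have H_neq0 : H != 0 by apply/prodf_neq0 => i _; rewrite expf_neq0 ?f_neq0.
have H_dvd_r : H %| r.
  apply: prod_dvdp_coprime => [i j|i]; first exact: coprimep_fX.
  have [b [r' [rE r'_cop]]] := irreducible_power_split (f_irr i) r_neq0.
  have le_e_m := ell'_le (g i) (f i) (m i).
  rewrite rE dvdp_mulr // dvdp_exp2l //.
  have [le_m_b|lt_b_m] := leqP (m i) b; first exact: leq_trans le_m_b.
  have fi_dvd_p : f i ^+ (m i - b) %| p.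
    have : f i ^+ b * f i ^+ (m i - b) %| f i ^+ b * (r' * p).
      rewrite -exprD subnKC ?(ltnW lt_b_m) // mulrA -rE -fprodE.
      by rewrite (bigD1 i) //= dvdp_mulr.
    rewrite dvdp_mul2l ?expf_neq0 ?f_neq0 // Gauss_dvdpr //.
    exact: coprimep_expl r'_cop.
  have : polyL L (f i) ^+ (m i - b) %| g i.
    have : polyL L (f i) ^+ (m i - b) %| gprod.
      by rewrite -rmorphXn (dvdp_trans _ p_gprod) // dvdp_map.
    rewrite (bigD1 i) //= Gauss_dvdpl //; apply: coprimep_prodr => j _ j_neq_i.
    by apply: coprimep_polyL_fX_g; rewrite eq_sym.
  by move/(ell'_max (g_monic i) (f_monic i) (g_dvd i) (leq_subr _ _)); lia.
have [q rE] : exists q, r = q * H by exists (r %/ H); rewrite divpK.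
have KfloorHE : Kfloor * H = fprod.
  rewrite /Kfloor -big_split /=; apply: eq_bigr => i _; rewrite -exprD subnK //.
  exact: ell'_le.
have : Kfloor * H = (q * p) * H by rewrite KfloorHE fprodE rE mulrAC.
by move/(mulIf H_neq0) ->; rewrite dvdp_mull.
Qed.

Lemma polyL_Kfloor_dvd : polyL L Kfloor %| gprod.
Proof.
rewrite /polyL rmorph_prod; apply: dvdp_prod => i.
by rewrite rmorphXn; apply: ell'_dvd.
Qed.

Lemma dvdp_polyL_Kceil : gprod %| polyL L Kceil.
Proof.
rewrite /polyL rmorph_prod; apply: dvdp_prod => i.
by rewrite rmorphXn; apply: ell_dvd.
Qed.

Lemma Kfloor_dvd : Kfloor %| fprod.
Proof. by apply: dvdp_prod => i; rewrite dvdp_exp2l ?leq_subr. Qed.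

Lemma Kceil_dvd_prod : Kceil %| fprod.
Proof. by apply: dvdp_prod => i; rewrite dvdp_exp2l ?ell_le. Qed.

Lemma size_prod_sub_Kfloor :
  (size fprod - size Kfloor = \sum_(i < s) e' i * (size (f i)).-1)%N.
Proof.
have predn_size (k : 'I_s -> nat) :
    ((size (\prod_(i < s) f i ^+ k i)%R).-1 = \sum_(i < s) (size (f i)).-1 * k i)%N.
  rewrite predn_size_prod => [|i]; last by rewrite expf_neq0 ?f_neq0.
  by apply: eq_bigr => i _; rewrite size_exp.
have size_pos (k : 'I_s -> nat) : (0 < size (\prod_(i < s) f i ^+ k i)%R)%N.
  by rewrite size_poly_gt0; apply/prodf_neq0 => i _; rewrite expf_neq0 ?f_neq0.
have sumE : (\sum_(i < s) (size (f i)).-1 * m i = \sum_(i < s) (size (f i)).-1 * (m i - e' i)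
    + \sum_(i < s) e' i * (size (f i)).-1)%N.
  rewrite -big_split; apply: eq_bigr => i _.
  by rewrite /= (mulnC (ell' _ _ _)) -mulnDr subnK ?ell'_le.
move: (predn_size m) (predn_size (fun i => (m i - e' i)%N)) => /= fprodE KfloorE.
move: (size_pos m) (size_pos (fun i => (m i - e' i)%N)) fprodE KfloorE => /=.
rewrite sumE /Kfloor.
move: (size (\prod_(i < s) f i ^+ m i)%R) (size (\prod_(i < s) f i ^+ (m i - e' i))%R) => a b.
move: (\sum_(i < s) (size (f i)).-1 * (m i - e' i))%N (\sum_(i < s) e' i * (size (f i)).-1)%N.
lia.
Qed.

Lemma predn_size_Kceil : ((size Kceil).-1 = \sum_(i < s) e i * (size (f i)).-1)%N.
Proof.
rewrite predn_size_prod => [|i]; last by rewrite expf_neq0 ?f_neq0.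
by apply: eq_bigr => i _; rewrite size_exp mulnC.
Qed.

Lemma sum_ell'_nontrivial : (\sum_(i < s) e' i * (size (f i)).-1 =
  \sum_(i < s | g i != polyL L (f i) ^+ m i) e' i * (size (f i)).-1)%N.
Proof. by rewrite [RHS]big_rmcond //= => i /negPn /eqP gi_eq; rewrite /ell' gi_eq eqxx. Qed.

Lemma sum_ell_noncoprime : (\sum_(i < s) e i * (size (f i)).-1 =
  \sum_(i < s | ~~ coprimep gprod (polyL L (f i))) e i * (size (f i)).-1)%N.
Proof.
rewrite [RHS]big_rmcond //= => i /negPn gprod_cop.
have : coprimep (g i) (g i).
  apply: coprimep_dvdl (g_dvd i) _; apply: coprimep_expr.
  exact: coprimep_dvdr (g_dvd_prod i) gprod_cop.
rewrite coprimepp size_poly_eq1 eqp_monic ?monic1 // => /eqP gi1.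
by rewrite /ell gi1 eqxx.
Qed.

End KFactors.

Lemma size_mxminpoly_cyclic (F : fieldType) n (M : 'M[F]_n.+1) :
  cyclic_mx M -> size (mxminpoly M) = n.+2.
Proof.
case=> v cyclic_v; apply/eqP; rewrite eqn_leq; apply/andP; split.
  have charM_neq0 : char_poly M != 0 by rewrite -size_poly_gt0 size_char_poly.
  by rewrite -(size_char_poly M) dvdp_leq // mxminpoly_dvd_char.
rewrite ltnNge; apply/negP => size_le.
have := horner_cyclic_eq0 cyclic_v size_le.
rewrite -trmx_horner mx_root_minpoly trmx0 mulmx0 => /(_ erefl) /eqP.
by rewrite (negbTE (monic_neq0 (mxminpoly_monic M))).
Qed.

Lemma foldr_gcdp_spec (R : idomainType) (P : {poly R} -> Prop) (p0 : {poly R})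
    (l : seq {poly R}) :
  (forall a b, P a -> P b -> P (gcdp a b)) -> P p0 -> (forall x, x \in l -> P x) ->
  let d := foldr (@gcdp R) p0 l in [/\ P d, d %| p0 & forall x, x \in l -> d %| x].
Proof.
move=> P_gcdp P_p0; elim: l => [|a l IHl] P_l /=; first by split => //; rewrite dvdpp.
have [P_d d_dvd_p0 d_dvd_l] := IHl (fun x x_in_l => P_l x (mem_behead (s := a :: l) x_in_l)).
split; first by apply: P_gcdp => //; apply: P_l; rewrite mem_head.
  exact: dvdp_trans (dvdp_gcdr _ _) d_dvd_p0.
move=> x; rewrite in_cons => /predU1P [->|x_in_l]; first exact: dvdp_gcdl.
exact: dvdp_trans (dvdp_gcdr _ _) (d_dvd_l x x_in_l).
Qed.

Section CyclicCodeWeight.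
Variables (K : fieldType) (L : fieldExtType K) (n : nat).
Variables (B : 'M[K]_n.+1) (v : 'rV[K]_n.+1) (phi h : {poly K}).
Variables (G : {poly L}) (C : 'M[L]_n.+1).
Hypothesis cyclic_v : row_free (\matrix_(i < n.+1) (v *m B ^+ i)).
Hypotheses (phiB0 : horner_mx B phi = 0) (size_phi : size phi = n.+2).
Hypothesis h_dvd : h %| phi.
Local Notation lift := (map_mx (in_alg L)).
Hypothesis C_eq : (C :=: horner_mx (lift B) G)%MS.

Let rank_h : \rank (horner_mx B h) = (n.+2 - size h)%N.
Proof. exact: (rank_horner_mx_dvd cyclic_v phiB0 size_phi h_dvd). Qed.

Lemma horner_mx_sub_of_code (W : 'M[K]_n.+1) :
  (forall p, p %| phi -> polyL L p %| G -> p %| h) ->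
  (C <= lift W)%MS -> (horner_mx B h <= W)%MS.
Proof.
move=> h_max CW; pose I q := forall r, (v *m horner_mx B (r * q) <= W)%MS.
have I_dvd a b : I a -> a %| b -> I b by move=> Ia /dvdpP [c ->] r; rewrite mulrA.
have I_gcdp a b : I a -> I b -> I (gcdp a b).
  move=> Ia Ib; have [u /andP [comb_dvd _]] := Bezoutp a b.
  apply: I_dvd comb_dvd => r; rewrite mulrDr rmorphD mulmxDr !mulrA.
  by apply: addmx_sub; [apply: Ia | apply: Ib].
have I_phi : I phi by move=> r; rewrite rmorphM /= phiB0 mulr0 mulmx0 sub0mx.
have I_coord t : I (coord_poly t G).
  move=> r; rewrite -coord_polyM -row_coordmx_horner.
  apply: submx_trans (row_sub t _) _; rewrite -sub_map_coordmx.
  rewrite rmorphM /= -mulmxE mulmxA; apply: submx_trans (submxMl _ _) _.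
  by rewrite -C_eq.
have I_l x : x \in [seq coord_poly t G | t <- enum 'I_(\dim {:L})] -> I x.
  by case/mapP => t _ ->.
have [I_d d_dvd_phi d_dvd_coord] := foldr_gcdp_spec I_gcdp I_phi I_l.
set d := foldr _ _ _ in I_d d_dvd_phi d_dvd_coord.
have d_dvd_G : polyL L d %| G.
  rewrite [G]coord_polyK; apply: (big_ind (fun q => polyL L d %| q)) => [|a b|t _].
  - exact: dvdp0.
  - exact: dvdp_add.
  - by rewrite dvdp_mull // dvdp_map d_dvd_coord //; apply: map_f; rewrite mem_enum.
have I_h := I_dvd _ _ I_d (h_max _ d_dvd_phi d_dvd_G).
apply/row_subP => i; rewrite -[horner_mx B h]mul1mx row_mul.
have [q _ ->] := horner_cyclic_onto cyclic_v (row i 1%:M).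
by rewrite -mulmxA mulmxE -rmorphM; apply: I_h.
Qed.

Lemma wtR_cyclic_code : polyL L h %| G ->
  (forall p, p %| phi -> polyL L p %| G -> p %| h) -> wtR C = (n.+2 - size h)%N.
Proof.
move=> h_dvd_G h_max; apply: wtR_eq => [|W CW].
  exists (horner_mx B h); split => //; rewrite C_eq map_horner_mx.
  by have /dvdpP [q ->] := h_dvd_G; rewrite rmorphM /= -mulmxE submxMl.
by rewrite -rank_h mxrankS // (horner_mx_sub_of_code h_max CW).
Qed.

Lemma wtR_dual_cyclic_code : G %| polyL L phi -> G %| polyL L h ->
  (forall q, G %| polyL L q -> h %| q) -> wtR (dualC C) = (size h).-1.
Proof.
move=> G_dvd_phi G_dvd_h h_min.
have phi_neq0 : phi != 0 by rewrite -size_poly_gt0 size_phi.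
have size_h : (size h <= n.+2)%N by rewrite -size_phi dvdp_leq.
have h_pos : (0 < size h)%N.
  rewrite size_poly_gt0; apply: contraNneq phi_neq0 => h0.
  by rewrite -dvd0p -h0.
have cyclic_vL : row_free (\matrix_(i < n.+1) (lift v *m lift B ^+ i)).
  suff -> : \matrix_(i < n.+1) (lift v *m lift B ^+ i) =
            lift (\matrix_(i < n.+1) (v *m B ^+ i)) by rewrite row_free_map.
  by apply/row_matrixP => i; rewrite rowK -map_row rowK map_mxM rmorphXn.
have phiBL0 : horner_mx (lift B) (polyL L phi) = 0.
  by rewrite -map_horner_mx phiB0 map_mx0.
have size_phiL : size (polyL L phi) = n.+2 by rewrite size_map_poly.
apply: wtR_eq => [|W CW].
  exists (kermx (horner_mx B h)^T); split.
    by rewrite mxrank_ker mxrank_tr rank_h; move: size_h h_pos; lia.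
  rewrite /dualC map_kermx -map_trmx map_horner_mx; apply: kermx_trS; rewrite C_eq.
  have /dvdpP [q hE] := G_dvd_h.
  by rewrite -/(polyL L h) hE rmorphM /= -mulmxE submxMl.
set U := kermx W^T.
have UC : (lift U <= C)%MS.
  rewrite -(eqmxP (kermx_trK C)) map_kermx -map_trmx; exact: kermx_trS.
have U_sub : (U <= horner_mx B h)%MS.
  apply/row_subP => i; have [q _ rowE] := horner_cyclic_onto cyclic_v (row i U).
  have : G %| polyL L q.
    apply: (horner_cyclic_sub_dvdp cyclic_vL phiBL0 size_phiL G_dvd_phi).
    rewrite -C_eq (submx_trans _ UC) // -map_horner_mx -map_mxM -rowE.
    by rewrite map_submx row_sub.
  by move/h_min/dvdpP => [c qE]; rewrite rowE qE rmorphM /= -mulmxE mulmxA submxMl.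
have := mxrankS U_sub; rewrite mxrank_ker mxrank_tr rank_h.
by move: (rank_leq_row W) size_h h_pos; lia.
Qed.

End CyclicCodeWeight.

Theorem theorem4 (K : fieldType) (L : fieldExtType K) (n : nat)
    (M : 'M[K]_n.+1) (s : nat) (f : 'I_s -> {poly K}) (m : 'I_s -> nat)
    (C : 'M[L]_n.+1) (g : 'I_s -> {poly L}) :
  (n.+1 <= \dim {:L})%N ->
  cyclic_mx M ->
  (forall i, f i \is monic) ->
  (forall i, irreducible_poly (f i)) ->
  injective f ->
  (forall i, 0 < m i)%N ->
  mxminpoly M = \prod_(i < s) f i ^+ m i ->
  (C *m (mxL L M)^T <= C)%MS ->
  (forall i, g i \is monic) ->
  (forall i, g i %| polyL L (f i) ^+ m i) ->
  (C :=: (horner_mx (mxL L M) (\prod_(i < s) g i))^T)%MS ->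
  let k := \rank C in
  ((0 < k)%N ->
     Mr C k = (\sum_(i < s) ell' (g i) (f i) (m i) * (size (f i)).-1)%N /\
     Mr C k = (\sum_(i < s | g i != polyL L (f i) ^+ m i)
                 ell' (g i) (f i) (m i) * (size (f i)).-1)%N) /\
  ((k < n.+1)%N ->
     Mr (dualC C) (n.+1 - k) = (\sum_(i < s) ell (g i) (f i) (m i) * (size (f i)).-1)%N /\
     Mr (dualC C) (n.+1 - k) =
       (\sum_(i < s | ~~ coprimep (\prod_(j < s) g j) (polyL L (f i)))
          ell (g i) (f i) (m i) * (size (f i)).-1)%N).
Proof.
move=> _ cyclicM f_monic f_irr f_inj _ minpolyM _ g_monic g_dvd C_eq k.
have size_phi := size_mxminpoly_cyclic cyclicM.
have [v cyclic_v] := cyclicM.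
have phiB0 : horner_mx M^T (mxminpoly M) = 0.
  by rewrite -trmx_horner mx_root_minpoly trmx0.
have CE : (C :=: horner_mx (map_mx (in_alg L) M^T) (\prod_(i < s) g i))%MS.
  by rewrite -map_trmx -trmx_horner.
have gprod_dvd_phiL : \prod_(i < s) g i %| polyL L (mxminpoly M).
  rewrite minpolyM /polyL rmorph_prod; apply: dvdp_prod => i.
  by rewrite rmorphXn; apply: g_dvd.
rewrite minpolyM in phiB0 size_phi gprod_dvd_phiL.
have rank_dual : \rank (dualC C) = (n.+1 - k)%N by rewrite mxrank_ker mxrank_tr.
split=> _.
  have MrE : Mr C k = (\sum_(i < s) ell' (g i) (f i) (m i) * (size (f i)).-1)%N.
    rewrite Mr_rank (wtR_cyclic_code cyclic_v phiB0 size_phi (Kfloor_dvd f m g) CE).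
    - by rewrite -size_phi size_prod_sub_Kfloor.
    - exact: polyL_Kfloor_dvd.
    - by move=> p; apply: dvdp_Kfloor.
  by rewrite -sum_ell'_nontrivial.
have MrE : Mr (dualC C) (n.+1 - k) =
    (\sum_(i < s) ell (g i) (f i) (m i) * (size (f i)).-1)%N.
  rewrite -rank_dual Mr_rank.
  rewrite (wtR_dual_cyclic_code cyclic_v phiB0 size_phi (Kceil_dvd_prod f m g) CE gprod_dvd_phiL).
  - exact: predn_size_Kceil.
  - exact: dvdp_polyL_Kceil.
  - by move=> q; apply: Kceil_dvd.
by rewrite -sum_ell_noncoprime.
Qed.
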